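(* In the setting described in the context, for every $j$ with $1\leqslant j\leqslant n-1$, the set of lines $\{\ell_J : J \text{ an ordered subset of } \{1,\ldots,|L|\},\ |J|=j\}$ is a set of lines in $\Sigma_{j+1}$ whose directions (their intersection points with the hyperplane $\pi_{j+1}$ of $\Sigma_{j+1}$, regarded as the hyperplane at infinity) are pairwise distinct and contained in an $|L|^{j}$ grid of $\pi_{j+1}$.
   Context: Let ${\mathbb K}$ be a field, $n\geqslant 2$, and consider $\mathrm{PG}_n({\mathbb K})$. For two non-intersecting subspaces $x,y$, $x\oplus y$ denotes their span. Fix points $x_0,\ldots,x_n$ in general position and put $\Sigma_i=x_0\oplus\cdots\oplus x_i$, $\pi_i=x_1\oplus\cdots\oplus x_i$ for $i=1,\ldots,n$. For $i=3,\ldots,n$ let $y_i$ be a point on the line $x_{i-1}\oplus x_i$ different from $x_{i-1}$ and $x_i$. Let $L$ be a finite set of lines of the plane $\Sigma_2$ meeting the line $\pi_2$ in pairwise distinct points, all different from $x_2$. Label them $\ell_{\{1\}},\ldots,\ell_{\{|L|\}}$. An ordered subset $J$ of $\{1,\ldots,|L|\}$ is a sequence of distinct elements; for $|J|\geqslant2$ write $J=(\ldots,b,a)$ ($a$ last, $b$ second-to-last) and let $J\setminus\{a\}$, $J\setminus\{b\}$ be obtained by deleting $a$, resp. $b$, keeping the order. For $2\leqslant|J|\leqslant n-1$ define recursively $\ell_J=(x_{|J|+1}\oplus \ell_{J\setminus\{a\}})\cap(y_{|J|+1}\oplus \ell_{J\setminus\{b\}})$. A $N^{k}$ grid in a $k$-dimensional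 projective space $\mathrm{PG}_k({\mathbb K})$ is a point set which, with respect to a suitable basis of the underlying vector space, has the form $\{\langle(a_1,\ldots,a_k,1)\rangle : a_i\in A_i\}$, where each $A_i\subseteq{\mathbb K}$ has size $N$; here $\pi_{j+1}$ is regarded as $\mathrm{PG}_j({\mathbb K})$. *)

From HB Require Import structures.
From mathcomp Require Import all_boot all_order all_algebra.
Set Implicit Arguments. Unset Strict Implicit. Unset Printing Implicit Defensive.
Import GRing.Theory.
Local Open Scope ring_scope.

(* PG_n(K) is modelled by the vector space K^(n+1) = 'rV[K]_(n.+1).
   Projective subspaces are row spaces of matrices (mxalgebra, scope %MS):
   a point is a subspace of rank 1, a line one of rank 2.  The span x (+) y
   is (x + y)%MS and the intersection is (x :&: y)%MS.  Point x_i is the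
   row space of the nonzero vector x i. *)

Definition Sigma (K : fieldType) (n : nat) (x : nat -> 'rV[K]_n.+1) (i : nat)
  : 'M[K]_n.+1 := (\sum_(k < i.+1) <<x k>>)%MS.

Definition Pi (K : fieldType) (n : nat) (x : nat -> 'rV[K]_n.+1) (i : nat)
  : 'M[K]_n.+1 := (\sum_(k < i.+1 | (0 < k)%N) <<x k>>)%MS.

(* An ordered subset J is
   a sequence; writing J = (..., b, a), rev J = a :: b :: r, so that
   J \ {a} = rev (b :: r) and J \ {b} = rev (a :: r).
   ell_J = (x_{|J|+1} (+) ell_{J\{a}}) :&: (y_{|J|+1} (+) ell_{J\{b}}). *)
Fixpoint ellJ_fuel (K : fieldType) (n m : nat) (x y : nat -> 'rV[K]_n.+1)
  (ell : 'I_m -> 'M[K]_n.+1) (f : nat) (J : seq 'I_m) : 'M[K]_n.+1 :=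
  match f with
  | 0 => 0
  | f'.+1 =>
    match rev J with
    | [:: a] => ell a
    | a :: b :: r =>
        ((x (size J).+1 + ellJ_fuel x y ell f' (rev (b :: r)))
         :&: (y (size J).+1 + ellJ_fuel x y ell f' (rev (a :: r))))%MS
    | [::] => 0
    end
  end.

Definition lineJ (K : fieldType) (n m : nat) (x y : nat -> 'rV[K]_n.+1)
  (ell : 'I_m -> 'M[K]_n.+1) (J : seq 'I_m) : 'M[K]_n.+1 :=
  ellJ_fuel x y ell (size J) J.

From mathcomp Require Import all_boot all_order all_algebra.
From mathcomp Require Import ring zify.
Set Implicit Arguments. Unset Strict Implicit. Unset Printing Implicit Defensive.
Import GRing.Theory.
Local Open Scope ring_scope.

(* Work in coordinates with respect to the basis x_0, ..., x_n.  The line ell_a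
   meets pi_2 in the point x_1 + c_a x_2 ([c_a = slope a]).  Put
   a_i := - tau_i x_(i+2), with scalars tau_i normalised so that a_i - a_(i+1)
   is a multiple of y_(i+3).  By induction on |J|, ell_J is a line of
   Sigma_(|J|+1), neither contained in pi_(|J|+1) nor through x_(|J|+1), and it
   passes through
       d_J = x_1 + sum_i (c_(J_i) - c_(J_(i-1))) a_i          (c_(J_(-1)) = 0):
   the planes x_(k+1) (+) ell_(J\a) and y_(k+1) (+) ell_(J\b) lie in a common
   solid, hence meet in a line, and d_J lies on both.  So d_J spans the
   direction ell_J :&: pi_(|J|+1).  Summation by parts gives
   d_J = x_1 + sum_i c_(J_i) e_i with e_i = a_i - a_(i+1) and a_|J| := 0; the
   e_i and x_1 form a basis of pi_(|J|+1), in which the directions are the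
   points of the grid with coordinates (c_(J_0), ..., c_(J_(|J|-1))).  They are
   pairwise distinct because a |-> c_a is injective. *)

Section RowSpaces.
Variable K : fieldType.

Lemma cap_rV_notsub N p (v : 'rV[K]_N) (S : 'M_(p, N)) :
  ~~ (v <= S)%MS -> (v :&: S)%MS = 0.
Proof.
move=> nvS; apply/eqP; rewrite -mxrank_eq0; apply: contraNT nvS => nz.
suff: (v <= v :&: S)%MS by rewrite sub_capmx => /andP[].
have [_ <-] := mxrank_leqif_sup (capmxSl v S).
by rewrite eqn_leq mxrankS ?capmxSl //= (leq_trans (rank_leq_row v)) // lt0n.
Qed.

Lemma mxrank_adds_rV N p (v : 'rV[K]_N) (A : 'M_(p, N)) :
  ~~ (v <= A)%MS -> \rank (v + A)%MS = (\rank A).+1.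
Proof.
move=> nvA; rewrite mxrank_disjoint_sum ?cap_rV_notsub // rank_rV.
by case: eqP nvA => [->|]; rewrite ?sub0mx.
Qed.

Lemma sub_adds_rV_cancel N p q r (v : 'rV[K]_N) (A : 'M_(p, N)) (S : 'M_(q, N))
    (W : 'M_(r, N)) :
  (A <= S)%MS -> ~~ (v <= S)%MS -> (W <= v + A)%MS -> (W <= S)%MS -> (W <= A)%MS.
Proof.
move=> sAS nvS WvA WS.
have : (W <= (A + v) :&: S)%MS by rewrite sub_capmx addsmxC WvA.
by rewrite -(matrix_modl v sAS) cap_rV_notsub // addsmx0.
Qed.

Lemma submx_of_mxrank_geq N p q r (A : 'M[K]_(p, N)) (B : 'M_(q, N)) (C : 'M_(r, N)) :
  (A <= C)%MS -> (B <= C)%MS -> (\rank C <= \rank B)%N -> (A <= B)%MS.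
Proof.
move=> sAC sBC rCB; apply: submx_trans sAC _.
by have [_ <-] := mxrank_leqif_sup sBC; rewrite eqn_leq rCB mxrankS.
Qed.

Lemma eqmx_rV_rank1 N p (v : 'rV[K]_N) (A : 'M_(p, N)) :
  v != 0 -> (v <= A)%MS -> \rank A = 1%N -> (v == A)%MS.
Proof. by move=> nz vA rA; rewrite -(mxrank_leqif_eq vA) rank_rV nz rA. Qed.

Lemma eqmx_cap_line N p q (A : 'M_(p, N)) (B : 'M_(q, N)) (v : 'rV[K]_N) :
  \rank A = 2%N -> ~~ (A <= B)%MS -> v != 0 -> (v <= A :&: B)%MS ->
  (v == A :&: B)%MS.
Proof.
move=> rA nAB nz vAB; apply: eqmx_rV_rank1 => //; apply/eqP.
have rv : \rank v = 1%N by rewrite rank_rV nz.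
rewrite eqn_leq -{2}rv mxrankS // andbT leqNgt; apply: contra nAB => r2.
suff: (A <= A :&: B)%MS by rewrite sub_capmx => /andP[].
have [_ <-] := mxrank_leqif_sup (capmxSl A B).
by rewrite eqn_leq mxrankS ?capmxSl //= rA.
Qed.

Lemma sumr_scale_by_parts (V : lmodType K) k (a : nat -> K) (f : nat -> V) :
  \sum_(i < k) a i.+1 *: (f i - f i.+1) =
  \sum_(i < k) (a i.+1 - a i) *: f i + a 0%N *: f 0%N - a k *: f k.
Proof.
elim: k => [|k IH]; first by rewrite !big_ord0 add0r subrr.
rewrite !big_ord_recr /= IH scalerBr scalerBl.
rewrite -!addrA; congr (_ + _).
by rewrite addrCA [RHS]addrCA; congr (_ + _); rewrite !addrA [_ + a 0%N *: _]addrC.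
Qed.

Lemma affine_coord_inj N k (e : 'I_k -> 'rV[K]_N) (e0 : 'rV_N) (a b : 'I_k -> K) :
  row_free (col_mx (\matrix_(i < k) e i) e0) ->
  ((\sum_(i < k) a i *: e i + e0)%R == (\sum_(i < k) b i *: e i + e0)%R)%MS ->
  a =1 b.
Proof.
set B := col_mx _ _ => freeB /andP[/sub_rVP[lam def_a] _].
have chart (u : 'I_k -> K) s :
    row_mx (\row_i u i) s%:M *m B = \sum_(i < k) u i *: e i + s *: e0.
  rewrite mul_row_col mul_scalar_mx mulmx_sum_row.
  by congr (_ + _); apply: eq_bigr => i _; rewrite rowK mxE.
have : (row_mx (\row_i a i) 1%:M - lam *: row_mx (\row_i b i) 1%:M) *m B = 0.
  by rewrite mulmxBl -scalemxAl !chart !scale1r def_a subrr.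
move/eqP; rewrite (mulmx_free_eq0 _ freeB) scale_row_mx opp_row_mx add_row_mx.
rewrite row_mx_eq0 !subr_eq0 => /andP[/eqP ea /eqP e1] i.
have lam1 : lam = 1.
  by have := congr1 (fun M : 'M_1 => M 0 0) e1; rewrite !mxE eqxx mulr1 => <-.
by have := congr1 (fun M : 'rV_k => M 0 i) ea; rewrite !mxE lam1 mul1r.
Qed.
End RowSpaces.

Section Flag.
Variables (K : fieldType) (n : nat) (x : nat -> 'rV[K]_n.+1).

Lemma x_sub_Sigma i k : (i <= k)%N -> (x i <= Sigma x k)%MS.
Proof. by move=> ik; rewrite (sumsmx_sup (Ordinal (ik : i < k.+1)%N)) ?genmxE. Qed.

Lemma x_sub_Pi i k : (0 < i <= k)%N -> (x i <= Pi x k)%MS.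
Proof.
by case/andP=> i0 ik; rewrite (sumsmx_sup (Ordinal (ik : i < k.+1)%N)) ?genmxE.
Qed.

Lemma Sigma_subS k : (Sigma x k <= Sigma x k.+1)%MS.
Proof. by apply/sumsmx_subP => i _; rewrite genmxE x_sub_Sigma // ltnW. Qed.

Lemma Pi_sub_Sigma k : (Pi x k <= Sigma x k)%MS.
Proof. by apply/sumsmx_subP => i _; rewrite genmxE x_sub_Sigma // -ltnS. Qed.

Lemma PiS k : (Pi x k.+1 == x k.+1 + Pi x k)%MS.
Proof.
apply/andP; split.
  apply/sumsmx_subP => i i0; rewrite genmxE.
  have := ltn_ord i; rewrite ltnS leq_eqVlt => /orP[/eqP->|ik].
    exact: addsmxSl.
  by apply: submx_trans (addsmxSr _ _); rewrite x_sub_Pi // i0.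
rewrite addsmx_sub x_sub_Pi //=.
by apply/sumsmx_subP => i i0; rewrite genmxE x_sub_Pi // i0 ltnW.
Qed.

Lemma Pi2_sub : (Pi x 2 <= x 1%N + x 2%N)%MS.
Proof.
apply/sumsmx_subP => -[[|[|[|i]]] //= _ _]; rewrite genmxE;
  [exact: addsmxSl | exact: addsmxSr].
Qed.

Lemma mxrank_Sigma_le k : (\rank (Sigma x k) <= k.+1)%N.
Proof.
rewrite /Sigma; apply: leq_trans (mxrank_sum_leqif _).1 _ => /=.
rewrite -[X in (_ <= X)%N]card_ord -sum1_card leq_sum // => i _.
by rewrite genmxE rank_leq_row.
Qed.
End Flag.

Section Coordinates.
Variables (K : fieldType) (n : nat) (x : nat -> 'rV[K]_n.+1).
Hypothesis x_free : row_free (\matrix_(i < n.+1) x i).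

Let X := \matrix_(i < n.+1) x i.

(* Junk for [i > n], where [inord i] is [0]. *)
Definition xcoord (i : nat) (v : 'rV[K]_n.+1) : K := (v *m invmx X) 0 (inord i).

Lemma xcoordD i u v : xcoord i (u + v) = xcoord i u + xcoord i v.
Proof. by rewrite /xcoord mulmxDl mxE. Qed.

Lemma xcoordZ i a v : xcoord i (a *: v) = a * xcoord i v.
Proof. by rewrite /xcoord -scalemxAl mxE. Qed.

Lemma xcoord_sum i (I : Type) (r : seq I) (P : pred I) (F : I -> 'rV[K]_n.+1) :
  xcoord i (\sum_(k <- r | P k) F k) = \sum_(k <- r | P k) xcoord i (F k).
Proof. by rewrite /xcoord mulmx_suml summxE. Qed.

Lemma xcoord_x i l : (i <= n)%N -> (l <= n)%N -> xcoord i (x l) = (i == l)%:R.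
Proof.
move=> hi hl; have -> : x l = delta_mx 0 (inord l) *m X by rewrite -rowE rowK inordK.
rewrite /xcoord mulmxK -?row_free_unit // mxE eqxx /=.
by rewrite -(inj_eq val_inj) /= !inordK.
Qed.

Lemma xcoord_Sigma k l v : (k < l <= n)%N -> (v <= Sigma x k)%MS -> xcoord l v = 0.
Proof.
case/andP=> kl ln /sub_sumsmxP[u ->]; rewrite xcoord_sum big1 // => i _.
have /sub_rVP[a ->] : (u i *m <<x i>> <= x i)%MS.
  by rewrite (submx_trans (submxMl _ _)) ?genmxE.
have il : (i < l)%N := leq_trans (ltn_ord i) kl.
by rewrite xcoordZ xcoord_x ?(leq_trans (ltnW il) ln) // (gtn_eqF il) mulr0.
Qed.

Lemma notin_Sigma k l v :
  (k < l <= n)%N -> xcoord l v != 0 -> ~~ (v <= Sigma x k)%MS.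
Proof. by move=> hkl; apply: contra => /(xcoord_Sigma hkl)->. Qed.

Lemma x_notin_Sigma k l : (k < l <= n)%N -> ~~ (x l <= Sigma x k)%MS.
Proof.
move=> hkl; have /andP[_ ln] := hkl.
by apply: notin_Sigma hkl _; rewrite xcoord_x // eqxx oner_eq0.
Qed.

Lemma sub_adds_xcoord i l v : (i <= n)%N -> (l <= n)%N -> i != l ->
  (v <= x i + x l)%MS -> v = xcoord i v *: x i + xcoord l v *: x l.
Proof.
move=> hi hl il /sub_addsmxP[[u w] /= ->].
rewrite [u]mx11_scalar [w]mx11_scalar !mul_scalar_mx !xcoordD !xcoordZ !xcoord_x //.
by rewrite !eqxx (negbTE il) eq_sym (negbTE il) /= !mulr1 !mulr0 addr0 add0r.
Qed.

Lemma rank_Pi k : (k <= n)%N -> \rank (Pi x k) = k.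
Proof.
elim: k => [_|k IH hk].
  apply/eqP; rewrite mxrank_eq0 -submx0; apply/sumsmx_subP => -[[]] //.
have kn : (k < k.+1 <= n)%N by rewrite ltnSn hk.
have nxPi : ~~ (x k.+1 <= Pi x k)%MS.
  by apply: contra (x_notin_Sigma kn) => /submx_trans->; rewrite ?Pi_sub_Sigma.
by rewrite (eqmx_rank (PiS x k)) mxrank_adds_rV // IH // ltnW.
Qed.
End Coordinates.

Section Construction.
Variables (K : fieldType) (n m : nat) (x y : nat -> 'rV[K]_n.+1)
  (ell : 'I_m -> 'M[K]_n.+1).
Hypothesis n_ge2 : (2 <= n)%N.
Hypothesis x_free : row_free (\matrix_(i < n.+1) x i).
Hypothesis y_on_line : forall i : nat, (3 <= i <= n)%N ->
  [/\ y i != 0, (y i <= x i.-1 + x i)%MS, ~~ (y i <= x i.-1)%MS & ~~ (y i <= x i)%MS].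
Hypothesis ell_lines : forall a : 'I_m,
  [/\ \rank (ell a) = 2%N, (ell a <= Sigma x 2)%MS, \rank (ell a :&: Pi x 2)%MS = 1%N
    & ~~ ((ell a :&: Pi x 2) == x 2%N)%MS].
Hypothesis ell_Pi2_inj : forall a a' : 'I_m, a != a' ->
  ~~ ((ell a :&: Pi x 2) == (ell a' :&: Pi x 2))%MS.

Local Notation lineJ := (lineJ x y ell).

Definition ya i := xcoord x i.-1 (y i).
Definition yb i := xcoord x i (y i).

Lemma y_decomp i : (3 <= i <= n)%N -> y i = ya i *: x i.-1 + yb i *: x i.
Proof.
move=> hi; have [_ y_sub _ _] := y_on_line hi; have /andP[i3 i_n] := hi.
apply: sub_adds_xcoord y_sub => //; first exact: leq_trans (leq_pred i) i_n.
by rewrite neq_ltn ltn_predL (leq_trans _ i3).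
Qed.

Lemma ya_neq0 i : (3 <= i <= n)%N -> ya i != 0.
Proof.
move=> hi; have [_ _ _ /negP nyx] := y_on_line hi; apply/eqP => ya0; apply: nyx.
by rewrite (y_decomp hi) ya0 scale0r add0r scalemx_sub.
Qed.

Lemma yb_neq0 i : (3 <= i <= n)%N -> yb i != 0.
Proof.
move=> hi; have [_ _ /negP nyx _] := y_on_line hi; apply/eqP => yb0; apply: nyx.
by rewrite (y_decomp hi) yb0 scale0r addr0 scalemx_sub.
Qed.

Lemma y_notin_Sigma i : (3 <= i <= n)%N -> ~~ (y i <= Sigma x i.-1)%MS.
Proof.
move=> hi; have /andP[i3 i_n] := hi; apply: (notin_Sigma x_free _ (yb_neq0 hi)).
by rewrite ltn_predL (leq_trans _ i3).
Qed.

Fixpoint tau k : K := if k is k'.+1 then - tau k' * (yb k'.+3 / ya k'.+3) else -1.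

Lemma tau_neq0 k : (k.+2 <= n)%N -> tau k != 0.
Proof.
elim: k => [|k IH] hk /=; first by rewrite oppr_eq0 oner_eq0.
have hk3 : (3 <= k.+3 <= n)%N by [].
by rewrite !mulf_neq0 ?oppr_eq0 ?invr_eq0 ?yb_neq0 ?ya_neq0 ?(IH (ltnW hk)).
Qed.

Definition axis k : 'rV[K]_n.+1 := - tau k *: x k.+2.

Lemma axis_sub k : (axis k <= x k.+2)%MS.
Proof. exact: scalemx_sub. Qed.

Lemma axis_subS r : (r.+3 <= n)%N ->
  axis r - axis r.+1 = - (tau r / ya r.+3) *: y r.+3.
Proof.
move=> hr; have hr3 : (3 <= r.+3 <= n)%N by rewrite hr.
have ya0 := ya_neq0 hr3.
rewrite (y_decomp hr3) /axis /= scalerDr !scalerA -scaleNr.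
by congr (_ *: _ + _ *: _); field.
Qed.

Definition slope (a : 'I_m) : K :=
  let w := nz_row (ell a :&: Pi x 2)%MS in xcoord x 2 w / xcoord x 1 w.

Lemma ell_cap_Pi2 a : ((x 1%N + slope a *: x 2%N)%R == ell a :&: Pi x 2)%MS.
Proof.
have [_ _ rank_p p_neq_x2] := ell_lines a.
set p := (ell a :&: Pi x 2)%MS in rank_p p_neq_x2 *; set w := nz_row p.
have w_neq0 : w != 0 by rewrite nz_row_eq0 -mxrank_eq0 rank_p.
have w_eq_p : (w == p)%MS := eqmx_rV_rank1 w_neq0 (nz_row_sub p) rank_p.
have w_decomp : w = xcoord x 1 w *: x 1%N + xcoord x 2 w *: x 2%N.
  apply: sub_adds_xcoord; rewrite ?(ltnW n_ge2) //.
  by rewrite (submx_trans (nz_row_sub p)) // (submx_trans (capmxSr _ _)) ?Pi2_sub.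
have w1_neq0 : xcoord x 1 w != 0.
  apply: contraNneq p_neq_x2 => w1_0.
  have w2_neq0 : xcoord x 2 w != 0.
    by apply: contraNneq w_neq0 => w2_0; rewrite w_decomp w1_0 w2_0 !scale0r addr0.
  rewrite -!(eqmxP w_eq_p) w_decomp w1_0 scale0r add0r.
  by rewrite !(eqmx_scale _ w2_neq0) submx_refl.
have -> : x 1%N + slope a *: x 2%N = (xcoord x 1 w)^-1 *: w.
  by rewrite {2}w_decomp scalerDr !scalerA mulVf // scale1r mulrC.
by rewrite !(eqmx_scale _ (invr_neq0 w1_neq0)).
Qed.

Lemma slope_inj : injective slope.
Proof.
move=> a a' eq_slope; apply/eqP; apply: contraT => /ell_Pi2_inj/negP[].
by rewrite -!(eqmxP (ell_cap_Pi2 a)) -!(eqmxP (ell_cap_Pi2 a')) eq_slope submx_refl.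
Qed.

Definition dir (J : seq 'I_m) : 'rV[K]_n.+1 :=
  x 1%N + \sum_(i < size J) ((map slope J)`_i - (0 :: map slope J)`_i) *: axis i.

Lemma dir1 a : dir [:: a] = x 1%N + slope a *: x 2%N.
Proof. by rewrite /dir big_ord1 /= subr0 /axis /= opprK scale1r. Qed.

Lemma dir_rcons J a :
  dir (rcons J a) = dir J + (slope a - (0 :: map slope J)`_(size J)) *: axis (size J).
Proof.
have cur i : (map slope (rcons J a))`_i = if (i < size J)%N then (map slope J)`_i
                                           else if i == size J then slope a else 0.
  by rewrite map_rcons nth_rcons size_map.
have prev i : (i <= size J)%N -> (0 :: map slope (rcons J a))`_i = (0 :: map slope J)`_i.
  by case: i => //= i; rewrite cur => ->.
rewrite /dir size_rcons big_ord_recr /= -addrA prev // cur ltnn eqxx.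
by congr (_ + (_ + _)); apply: eq_bigr => i _; rewrite cur prev /= ?ltn_ord // ltnW.
Qed.

Lemma dir_sub_Pi J : (dir J <= Pi x (size J).+1)%MS.
Proof.
apply: addmx_sub; first exact: x_sub_Pi.
apply: summx_sub => i _; rewrite scalemx_sub // (submx_trans (axis_sub i)) //.
by rewrite x_sub_Pi //= ltnS.
Qed.

Lemma dir_neq0 J : (size J < n)%N -> dir J != 0.
Proof.
move=> hJ; have h1 : (1 <= n)%N := ltnW n_ge2.
suff : xcoord x 1 (dir J) = 1.
  by apply: contra_eq_neq => ->; rewrite /xcoord mul0mx mxE eq_sym oner_neq0.
rewrite xcoordD xcoord_sum xcoord_x // big1 ?addr0 // => i _.
have hi : (i.+2 <= n)%N := leq_ltn_trans (ltn_ord i) hJ.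
by rewrite !xcoordZ xcoord_x //= mulr0n !mulr0.
Qed.

Definition grid_vec j i : 'rV[K]_n.+1 :=
  axis i - (if (i.+1 < j)%N then axis i.+1 else 0).

Lemma dir_grid J :
  dir J = \sum_(i < size J) (map slope J)`_i *: grid_vec (size J) i + x 1%N.
Proof.
pose f i := if (i < size J)%N then axis i else 0.
have := sumr_scale_by_parts (size J) (nth 0 (0 :: map slope J)) f.
rewrite /f ltnn scaler0 subr0 /= scale0r addr0 => by_parts.
rewrite /dir addrC; congr (_ + _).
transitivity (\sum_(i < size J) (map slope J)`_i *: (f i - f i.+1)).
  by rewrite by_parts; apply: eq_bigr => i _; rewrite /f ltn_ord.
by apply: eq_bigr => i _; rewrite /f /grid_vec ltn_ord.
Qed.

Local Notation grid_basis j := (col_mx (\matrix_(i < j) grid_vec j i) (x 1%N)).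

Lemma grid_basis_eq j : (j < n)%N -> (grid_basis j == Pi x j.+1)%MS.
Proof.
move=> hj; rewrite -!addsmxE; apply/andP; split.
  rewrite addsmx_sub x_sub_Pi // andbT; apply/row_subP => i; rewrite rowK.
  apply: addmx_sub; first by rewrite (submx_trans (axis_sub i)) ?x_sub_Pi /= ?ltnS.
  rewrite eqmx_opp; case: ifP => [ij|_]; last exact: sub0mx.
  by rewrite (submx_trans (axis_sub _)) ?x_sub_Pi /= ?ltnS.
have grid_sub i : (i < j)%N -> (grid_vec j i <= \matrix_(k < j) grid_vec j k)%MS.
  move=> ij; rewrite -[grid_vec j i](rowK (fun k : 'I_j => grid_vec j k) (Ordinal ij)).
  exact: row_sub.
apply/sumsmx_subP => -[[|[|l]] //= hl _]; rewrite genmxE ?addsmxSr //.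
have lj : (l < j)%N := hl.
have tau_l : - tau l != 0 by rewrite oppr_eq0 tau_neq0 // (leq_ltn_trans lj hj).
rewrite -[x _](scalerK tau_l) scalemx_sub // (submx_trans _ (addsmxSl _ _)) //.
pose f i := if (i < j)%N then axis i else 0.
have -> : - tau l *: x l.+2 = \sum_(l <= i < j) - (f i.+1 - f i).
  by rewrite sumrN telescope_sumr 1?ltnW // opprB /f ltnn subr0 lj.
rewrite big_nat; apply: summx_sub => i /andP[_ ij].
suff -> : - (f i.+1 - f i) = grid_vec j i by exact: grid_sub.
by rewrite opprB /f ij.
Qed.

Lemma grid_basis_free j : (j < n)%N -> row_free (grid_basis j).
Proof.
by move=> hj; rewrite /row_free (eqmx_rank (grid_basis_eq hj)) rank_Pi // addn1.
Qed.

Lemma ellJ_fuelS f J : ellJ_fuel x y ell f.+1 J =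
  match rev J with
  | [:: a] => ell a
  | a :: b :: r =>
      ((x (size J).+1 + ellJ_fuel x y ell f (rev (b :: r)))
       :&: (y (size J).+1 + ellJ_fuel x y ell f (rev (a :: r))))%MS
  | [::] => 0
  end.
Proof. by []. Qed.

Lemma lineJ_rcons2 R b a : lineJ (rcons (rcons R b) a) =
  ((x (size R).+3 + lineJ (rcons R b)) :&: (y (size R).+3 + lineJ (rcons R a)))%MS.
Proof.
by rewrite /lineJ !size_rcons ellJ_fuelS !rev_rcons !rev_cons !revK !size_rcons.
Qed.

Record line_inv (J : seq 'I_m) : Prop := LineInv {
  line_rank : \rank (lineJ J) = 2%N;
  line_sub_Sigma : (lineJ J <= Sigma x (size J).+1)%MS;
  dir_sub_line : (dir J <= lineJ J)%MS;
  line_notsub_Pi : ~~ (lineJ J <= Pi x (size J).+1)%MS;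
  x_notin_line : ~~ (x (size J).+1 <= lineJ J)%MS }.

Lemma line_inv1 a : line_inv [:: a].
Proof.
have [rank_ell ell_Sigma rank_cap cap_neq_x2] := ell_lines a.
have dir_cap : (dir [:: a] == ell a :&: Pi x 2)%MS by rewrite dir1 ell_cap_Pi2.
split=> //=.
- by case/andP: dir_cap => /submx_trans->; rewrite ?capmxSl.
- by apply: contra_eqN rank_cap => /capmx_idPl->; rewrite rank_ell.
- apply: contra cap_neq_x2 => x2_ell.
  have x2_cap : (x 2%N <= ell a :&: Pi x 2)%MS by rewrite sub_capmx x2_ell x_sub_Pi.
  have x2_notin : ~~ (x 2%N <= Sigma x 1)%MS by apply: x_notin_Sigma => //; rewrite n_ge2.
  have x2_neq0 : x 2%N != 0 by apply: contraNneq x2_notin => ->; rewrite sub0mx.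
  by rewrite andbC eqmx_rV_rank1.
Qed.

Section Step.
Variables (R : seq 'I_m) (b a : 'I_m).
Let r := size R.
Let L1 := lineJ (rcons R b).
Let L2 := lineJ (rcons R a).
Hypothesis r_bound : (r.+3 <= n)%N.
Hypotheses (rank_L1 : \rank L1 = 2%N) (rank_L2 : \rank L2 = 2%N).
Hypotheses (L1_Sigma : (L1 <= Sigma x r.+2)%MS) (L2_Sigma : (L2 <= Sigma x r.+2)%MS).
Hypotheses (dir_L1 : (dir (rcons R b) <= L1)%MS) (dir_L2 : (dir (rcons R a) <= L2)%MS).
Hypothesis L1_notsub_Pi : ~~ (L1 <= Pi x r.+2)%MS.
Hypotheses (x_notin_L1 : ~~ (x r.+2 <= L1)%MS) (x_notin_L2 : ~~ (x r.+2 <= L2)%MS).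
Hypothesis coplanar : (L2 <= x r.+2 + L1)%MS.

Let S1 := (x r.+3 + L1)%MS.
Let S2 := (y r.+3 + L2)%MS.

Let r3_bound : (3 <= r.+3 <= n)%N. Proof. by rewrite r_bound. Qed.

Let x_notin_Sigma2 : ~~ (x r.+3 <= Sigma x r.+2)%MS.
Proof. by apply: x_notin_Sigma; rewrite ?ltnSn. Qed.

Let y_notin_Sigma2 : ~~ (y r.+3 <= Sigma x r.+2)%MS.
Proof. exact: y_notin_Sigma r3_bound. Qed.

Lemma rank_S1 : \rank S1 = 3%N.
Proof.
rewrite mxrank_adds_rV ?rank_L1 //.
by apply: contra x_notin_Sigma2 => /submx_trans->.
Qed.

Lemma rank_S2 : \rank S2 = 3%N.
Proof.
rewrite mxrank_adds_rV ?rank_L2 //.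
by apply: contra y_notin_Sigma2 => /submx_trans->.
Qed.

Lemma rank_S1_add_S2 : \rank (S1 + S2)%MS = 4%N.
Proof.
set N := (x r.+3 + (x r.+2 + L1))%MS.
have x2_S : (x r.+2 <= S1 + S2)%MS.
  have -> : x r.+2 = (ya r.+3)^-1 *: (y r.+3 - yb r.+3 *: x r.+3).
    by rewrite (y_decomp r3_bound) addrK scalerA mulVf ?scale1r ?ya_neq0.
  rewrite scalemx_sub //; apply: addmx_sub.
    by rewrite (submx_trans _ (addsmxSr _ _)) ?addsmxSl.
  by rewrite eqmx_opp scalemx_sub // (submx_trans _ (addsmxSl _ _)) ?addsmxSl.
have N_S : (N == S1 + S2)%MS.
  have S1_S : (S1 <= S1 + S2)%MS := addsmxSl _ _.
  have x2L1_N : (x r.+2 + L1 <= N)%MS := addsmxSr _ _.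
  have x2_N : (x r.+2 <= N)%MS := submx_trans (addsmxSl _ _) x2L1_N.
  have y_N : (y r.+3 <= N)%MS.
    by rewrite (y_decomp r3_bound); apply: addmx_sub; rewrite scalemx_sub ?addsmxSl.
  rewrite !addsmx_sub (submx_trans (addsmxSl _ _) S1_S) x2_S.
  rewrite (submx_trans (addsmxSr _ _) S1_S) addsmxSl y_N.
  by rewrite (submx_trans (addsmxSr _ _) x2L1_N) (submx_trans coplanar x2L1_N).
rewrite -(eqmx_rank N_S) !mxrank_adds_rV ?rank_L1 //.
apply: contra x_notin_Sigma2 => /submx_trans->//.
by rewrite addsmx_sub x_sub_Sigma.
Qed.

Lemma rank_S1_cap_S2 : \rank (S1 :&: S2)%MS = 2%N.
Proof.
by have := mxrank_sum_cap S1 S2; rewrite rank_S1_add_S2 rank_S1 rank_S2 => /addnI.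
Qed.

Lemma x_notin_S1_cap_S2 : ~~ (x r.+3 <= S1 :&: S2)%MS.
Proof.
apply: contra x_notin_L2 => /submx_trans/(_ (capmxSr _ _)) x3_S2.
apply: sub_adds_rV_cancel (L2_Sigma) y_notin_Sigma2 _ (x_sub_Sigma _ _) => //.
have -> : x r.+2 = (ya r.+3)^-1 *: (y r.+3 - yb r.+3 *: x r.+3).
  by rewrite (y_decomp r3_bound) addrK scalerA mulVf ?scale1r ?ya_neq0.
by rewrite scalemx_sub // addmx_sub ?addsmxSl // eqmx_opp scalemx_sub.
Qed.

Lemma dir_S1_cap_S2 : (dir (rcons (rcons R b) a) <= S1 :&: S2)%MS.
Proof.
have prev_b : (0 :: map slope (rcons R b))`_(size (rcons R b)) = slope b.
  by rewrite size_rcons /= map_rcons nth_rcons size_map ltnn eqxx.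
rewrite sub_capmx dir_rcons prev_b size_rcons; apply/andP; split.
  apply: addmx_sub; first exact: submx_trans dir_L1 (addsmxSr _ _).
  by rewrite scalemx_sub // (submx_trans (axis_sub _)) ?addsmxSl.
have -> : dir (rcons R b) + (slope a - slope b) *: axis r.+1 =
    dir (rcons R a) + (slope b - slope a) *: (axis r - axis r.+1).
  rewrite !dir_rcons; move: (dir R) => D; rewrite -!addrA; congr (_ + _).
  rewrite scalerBr addrA -scalerDl -scaleNr.
  by congr (_ *: _ + _ *: _); ring.
rewrite axis_subS // scalerA; apply: addmx_sub.
  exact: submx_trans dir_L2 (addsmxSr _ _).
by rewrite scalemx_sub ?addsmxSl.
Qed.

Lemma S1_cap_S2_Sigma : (S1 :&: S2 <= Sigma x r.+3)%MS.
Proof.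
rewrite (submx_trans (capmxSl _ _)) // addsmx_sub x_sub_Sigma //.
exact: submx_trans L1_Sigma (Sigma_subS _ _).
Qed.

Lemma S1_cap_S2_notsub_Pi : ~~ (S1 :&: S2 <= Pi x r.+3)%MS.
Proof.
apply: contra L1_notsub_Pi => cap_Pi.
have S1_sub : (S1 <= x r.+3 + S1 :&: S2)%MS.
  apply: submx_of_mxrank_geq (submx_refl S1) _ _.
    by rewrite addsmx_sub addsmxSl capmxSl.
  by rewrite mxrank_adds_rV ?x_notin_S1_cap_S2 // rank_S1_cap_S2 rank_S1.
have L1_Pi : (L1 <= x r.+3 + Pi x r.+2)%MS.
  rewrite -(eqmxP (PiS x r.+2)).
  apply: submx_trans (addsmxSr _ _) (submx_trans S1_sub _).
  by rewrite addsmx_sub cap_Pi x_sub_Pi /= ?leqnn.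
exact: sub_adds_rV_cancel (Pi_sub_Sigma x r.+2) x_notin_Sigma2 L1_Pi L1_Sigma.
Qed.

Lemma line_inv_rcons2 : line_inv (rcons (rcons R b) a).
Proof.
split; rewrite ?size_rcons lineJ_rcons2 -/r -/L1 -/L2.
- exact: rank_S1_cap_S2.
- exact: S1_cap_S2_Sigma.
- exact: dir_S1_cap_S2.
- exact: S1_cap_S2_notsub_Pi.
- exact: x_notin_S1_cap_S2.
Qed.
End Step.

Lemma line_inv_all J : (0 < size J < n)%N -> line_inv J.
Proof.
have [k] := ubnP (size J); elim: k J => // k IH J.
case/lastP: J => [|J a] size_k /andP[// _ size_n].
case/lastP: J size_k size_n => [_ _|R b]; first exact: line_inv1.
rewrite !size_rcons ltnS => size_k size_n.
have inv_Rc c : line_inv (rcons R c) by apply: IH; rewrite size_rcons //= ltnW.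
have [rank_b Sigma_b dir_b notPi_b x_b] := inv_Rc b.
have [rank_a Sigma_a dir_a notPi_a x_a] := inv_Rc a.
rewrite !size_rcons in Sigma_b notPi_b x_b Sigma_a notPi_a x_a.
apply: line_inv_rcons2 => //.
have [Q [a_Q b_Q x_Q rank_Q]] : exists Q : 'M_n.+1,
    [/\ (lineJ (rcons R a) <= Q)%MS, (lineJ (rcons R b) <= Q)%MS,
        (x (size R).+2 <= Q)%MS & (\rank Q <= 3)%N].
  case/lastP: R {inv_Rc rank_b Sigma_b dir_b notPi_b x_b rank_a Sigma_a dir_a notPi_a x_a}
    size_k size_n => [|R c] size_k size_n.
    exists (Sigma x 2); split; [by case: (ell_lines a) | by case: (ell_lines b) | |].
    - exact: x_sub_Sigma.
    - exact: mxrank_Sigma_le.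
  exists (x (size R).+3 + lineJ (rcons R c))%MS.
  rewrite !lineJ_rcons2 !capmxSl size_rcons addsmxSl; split=> //.
  have [rank_c _ _ _ _] : line_inv (rcons R c).
    by apply: IH; rewrite size_rcons /= in size_k size_n *; lia.
  apply: leq_trans (mxrank_adds_leqif _ _).1 _.
  by rewrite rank_c -[3%N]/(1 + 2)%N leq_add2r rank_leq_row.
apply: submx_of_mxrank_geq a_Q _ _; first by rewrite addsmx_sub x_Q b_Q.
by rewrite mxrank_adds_rV // rank_b.
Qed.

Lemma dir_eq_lineJ_cap_Pi J : (0 < size J < n)%N ->
  (dir J == lineJ J :&: Pi x (size J).+1)%MS.
Proof.
move=> hJ; have /andP[_ size_n] := hJ.
have [rank_J _ dir_J notPi_J _] := line_inv_all hJ.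
by rewrite eqmx_cap_line ?dir_neq0 // sub_capmx dir_J dir_sub_Pi.
Qed.

Lemma rank_lineJ_cap_Pi J : (0 < size J < n)%N ->
  \rank (lineJ J :&: Pi x (size J).+1)%MS = 1%N.
Proof.
move=> hJ; have /andP[_ size_n] := hJ.
by rewrite -(eqmx_rank (dir_eq_lineJ_cap_Pi hJ)) rank_rV dir_neq0.
Qed.

Lemma lineJ_cap_Pi_grid J : (0 < size J < n)%N ->
  (lineJ J :&: Pi x (size J).+1 ==
   (\sum_(i < size J) (map slope J)`_i *: grid_vec (size J) i + x 1%N)%R)%MS.
Proof. by move=> hJ; rewrite -dir_grid andbC dir_eq_lineJ_cap_Pi. Qed.

Lemma lineJ_cap_Pi_inj J J' : (0 < size J < n)%N -> size J' = size J ->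
  (lineJ J :&: Pi x (size J).+1 == lineJ J' :&: Pi x (size J).+1)%MS -> J = J'.
Proof.
move=> hJ size_J'; have /andP[_ size_n] := hJ.
have hJ' : (0 < size J' < n)%N by rewrite size_J'.
have := lineJ_cap_Pi_grid hJ'; rewrite size_J' => /eqmxP eq_J'.
rewrite !(eqmxP (lineJ_cap_Pi_grid hJ)) !eq_J'.
move/(affine_coord_inj (grid_basis_free size_n)) => eq_coord.
apply: (inj_map slope_inj); apply: (@eq_from_nth _ 0); first by rewrite !size_map size_J'.
by move=> i; rewrite size_map => lt_i; apply: (eq_coord (Ordinal lt_i)).
Qed.
End Construction.

Unset Implicit Arguments.

Theorem theorem2p3 (K : fieldType) (n m : nat) (x y : nat -> 'rV[K]_n.+1)
  (ell : 'I_m -> 'M[K]_n.+1) :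
  (2 <= n)%N ->
  (* x_0, ..., x_n in general position (a basis of K^(n+1)) *)
  row_free (\matrix_(i < n.+1) x i) ->
  (* y_i (3 <= i <= n) is a point on x_{i-1} (+) x_i, distinct from x_{i-1}, x_i *)
  (forall i : nat, (3 <= i <= n)%N ->
     [/\ y i != 0, (y i <= x i.-1 + x i)%MS,
         ~~ (y i <= x i.-1)%MS & ~~ (y i <= x i)%MS]) ->
  (* L = {ell_0, ..., ell_(m-1)}: lines of Sigma_2 meeting pi_2 in a point,
     different from x_2, these points being pairwise distinct *)
  (forall i : 'I_m, [/\ \rank (ell i) = 2%N, (ell i <= Sigma x 2)%MS,
       \rank (ell i :&: Pi x 2)%MS = 1%N
     & ~~ ((ell i :&: Pi x 2) == x 2%N)%MS]) ->
  (forall i i' : 'I_m, i != i' ->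
     ~~ ((ell i :&: Pi x 2) == (ell i' :&: Pi x 2))%MS) ->
  forall j : nat, (1 <= j <= n.-1)%N ->
  [/\
   (* each ell_J, |J| = j, is a line of Sigma_{j+1} meeting pi_{j+1} in a point *)
   (forall J : seq 'I_m, uniq J -> size J = j ->
      [/\ \rank (lineJ x y ell J) = 2%N, (lineJ x y ell J <= Sigma x j.+1)%MS
        & \rank (lineJ x y ell J :&: Pi x j.+1)%MS = 1%N]),
   (* the directions are pairwise distinct *)
   (forall J J' : seq 'I_m, uniq J -> uniq J' -> size J = j -> size J' = j ->
      J != J' ->
      ~~ ((lineJ x y ell J :&: Pi x j.+1) == (lineJ x y ell J' :&: Pi x j.+1))%MS)
   &
   (* and lie in an |L|^j grid of pi_{j+1} *)
   exists (e : 'I_j -> 'rV[K]_n.+1) (e0 : 'rV[K]_n.+1) (A : 'I_j -> seq K),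
     [/\ row_free (col_mx (\matrix_(i < j) e i) e0),
         (col_mx (\matrix_(i < j) e i) e0 == Pi x j.+1)%MS,
         (forall i, uniq (A i) /\ size (A i) = m) &
         (forall J : seq 'I_m, uniq J -> size J = j ->
            exists a : 'I_j -> K, (forall i, a i \in A i) /\
              ((lineJ x y ell J :&: Pi x j.+1) ==
                 ((\sum_(i < j) a i *: e i) + e0)%R)%MS)]].
Proof.
move=> n_ge2 x_free y_on ell_lines ell_inj j /andP[j_gt0 j_le].
have j_lt : (j < n)%N by rewrite (leq_ltn_trans j_le) // ltn_predL (ltnW n_ge2).
have size_J (J : seq 'I_m) : size J = j -> (0 < size J < n)%N by move->; rewrite j_gt0.
(* Repetitions in J do no harm. *)
split.
- move=> J _ /[dup] /size_J hJ <-.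
  have [rank_J Sigma_J _ _ _] := line_inv_all n_ge2 x_free y_on ell_lines hJ.
  by split; rewrite ?(rank_lineJ_cap_Pi n_ge2 x_free y_on ell_lines hJ).
- move=> J J' _ _ /[dup] /size_J hJ <- size_J'; apply: contra.
  by move/(lineJ_cap_Pi_inj n_ge2 x_free y_on ell_lines ell_inj hJ size_J') ->.
exists (fun i : 'I_j => grid_vec x y j i), (x 1%N), (fun=> map (slope x ell) (enum 'I_m)).
split=> [||i|J _ /[dup] /size_J hJ <-].
- exact: grid_basis_free.
- exact: grid_basis_eq.
- have slope_inj := slope_inj n_ge2 x_free ell_lines ell_inj.
  by rewrite map_inj_uniq ?enum_uniq ?size_map -?enumT ?size_enum_ord.
exists (fun i => (map (slope x ell) J)`_i); split.
  move=> i; have /mapP[a _ ->] : (map (slope x ell) J)`_i \in map (slope x ell) J.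
    by rewrite mem_nth ?size_map.
  by rewrite map_f ?mem_enum.
exact: lineJ_cap_Pi_grid.
Qed.
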